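(* Let $\mathcal{G}$ be a finite-dimensional Lie algebra with Levi–Malcev decomposition $\mathcal{G}=N\ltimes S$, where $N$ is the radical and $S$ a semisimple (Levi) subalgebra, and let $\mathcal{S}$ be a finite abelian semigroup. Let $\mathcal{G}_{\mathcal{S}}=\mathcal{S}\otimes\mathcal{G}$ be the $\mathcal{S}$-expanded algebra, $E_N=\mathcal{S}\otimes N$ and $E_S=\mathcal{S}\otimes S$, so that $E_S$ is a subalgebra (the expansion of $S$), and let $E_S=N'\ltimes S_{\mathrm{exp}}$ be a Levi–Malcev decomposition of $E_S$, with $N'$ the radical of $E_S$ and $S_{\mathrm{exp}}$ semisimple. Then $N_{\mathrm{exp}}=E_N+N'$ is the radical of $\mathcal{G}_{\mathcal{S}}$, and $\mathcal{G}_{\mathcal{S}}=N_{\mathrm{exp}}\ltimes S_{\mathrm{exp}}$ is a Levi–Malcev decomposition of $\mathcal{G}_{\mathcal{S}}$.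
   Context: For a Lie algebra $\mathcal{G}$ with basis $\{X_i\}$, $[X_i,X_j]=C_{ij}^kX_k$, and a finite abelian semigroup $\mathcal{S}=\{\lambda_\alpha\}$ with 2-selector $K_{\alpha\beta}^\gamma$ ($=1$ if $\lambda_\alpha\lambda_\beta=\lambda_\gamma$, else $0$), the expanded algebra $\mathcal{S}\otimes\mathcal{G}$ has basis $\lambda_\alpha\otimes X_i$ and bracket $[\lambda_\alpha\otimes X_i,\lambda_\beta\otimes X_j]=K_{\alpha\beta}^\gamma C_{ij}^k\,\lambda_\gamma\otimes X_k$; for a subspace $V\subset\mathcal{G}$, $\mathcal{S}\otimes V$ denotes the span of $\lambda_\alpha\otimes v$, $v\in V$. The radical of a Lie algebra is its maximal solvable ideal; a Levi–Malcev decomposition writes the algebra as a semidirect sum of its radical and a semisimple subalgebra. *)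

From HB Require Import structures.
From mathcomp Require Import all_boot all_order all_algebra.
Set Implicit Arguments. Unset Strict Implicit. Unset Printing Implicit Defensive.
Import GRing.Theory.
Local Open Scope ring_scope.

Section LieGeneric.
Variables (F : fieldType) (V : vectType F) (br : V -> V -> V).

Definition is_lie : Prop :=
  [/\ (forall a x y z, br (a *: x + y) z = a *: br x z + br y z),
      (forall a x y z, br z (a *: x + y) = a *: br z x + br z y),
      (forall x, br x x = 0) &
      (forall x y z, br x (br y z) + br y (br z x) + br z (br x y) = 0)].

(* [A, B] : the subspace spanned by all brackets [a, b], a in A, b in B
   (by bilinearity, spanned by brackets of basis vectors). *)
Definition brspace (A B : {vspace V}) : {vspace V} :=
  (<<[seq br x y | x <- vbasis A, y <- vbasis B]>>)%VS.

Definition subalg (A : {vspace V}) : Prop := (brspace A A <= A)%VS.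

Definition ideal_of (L I : {vspace V}) : Prop :=
  (I <= L)%VS /\ (brspace L I <= I)%VS.

Definition derived (A : {vspace V}) (k : nat) : {vspace V} :=
  iter k (fun B => brspace B B) A.

Definition solvable (A : {vspace V}) : Prop := exists k, derived A k = 0%VS.

Definition radical_of (L R : {vspace V}) : Prop :=
  [/\ ideal_of L R, solvable R &
      forall I, ideal_of L I -> solvable I -> (R <= I)%VS -> I = R].

Definition semisimple (S : {vspace V}) : Prop :=
  subalg S /\ forall I, ideal_of S I -> solvable I -> I = 0%VS.

Definition levi_decomp (L N S : {vspace V}) : Prop :=
  [/\ radical_of L N, subalg S, semisimple S,
      directv (N + S)%VS & (N + S)%VS = L].

End LieGeneric.

(* G has basis X_0..X_{n-1}; elements are row vectors of coordinates.
   C i j k are the structure constants: [X_i, X_j] = sum_k C i j k X_k. *)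
Definition lie_br (F : fieldType) (n : nat) (C : 'I_n -> 'I_n -> 'I_n -> F)
  (u v : 'rV[F]_n) : 'rV[F]_n :=
  \row_k \sum_i \sum_j u 0 i * v 0 j * C i j k.

(* Finite abelian semigroup {lambda_0..lambda_{m-1}} with product mul;
   2-selector K a b g = 1 if lambda_a lambda_b = lambda_g, else 0. *)
Definition selector (m : nat) (mul : 'I_m -> 'I_m -> 'I_m) (a b g : 'I_m)
  (F : fieldType) : F := (mul a b == g)%:R.

(* Expanded algebra S (x) G: an element is an m x n matrix A, standing for
   sum_{a,i} A a i (lambda_a (x) X_i). *)
Definition exp_br (F : fieldType) (m n : nat) (mul : 'I_m -> 'I_m -> 'I_m)
  (C : 'I_n -> 'I_n -> 'I_n -> F) (A B : 'M[F]_(m, n)) : 'M[F]_(m, n) :=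
  \matrix_(g, k) \sum_a \sum_b \sum_i \sum_j
     (selector mul a b g F * C i j k * A a i * B b j).

(* lambda_a (x) v : the matrix whose row a is v and other rows are 0 *)
Definition tens (F : fieldType) (m n : nat) (a : 'I_m) (v : 'rV[F]_n)
  : 'M[F]_(m, n) := (delta_mx a (0 : 'I_1)) *m v.

(* S (x) W : span of lambda_a (x) v, v in W (equivalently v in a basis of W) *)
Definition expand_space (F : fieldType) (m n : nat) (W : {vspace 'rV[F]_n})
  : {vspace 'M[F]_(m, n)} :=
  (<<[seq tens a v | a <- enum 'I_m, v <- vbasis W]>>)%VS.

From HB Require Import structures.
From mathcomp Require Import all_boot all_order all_algebra ring.
Set Implicit Arguments. Unset Strict Implicit. Unset Printing Implicit Defensive.
Import GRing.Theory.
Local Open Scope ring_scope.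

(* Let p be the projection of G onto S along N.  As N is an ideal and S a
   subalgebra, p is a bracket homomorphism, and applying it row by row gives
   a homomorphism P of S (x) G onto E_S that fixes E_S and has kernel E_N.
   Then E_N + N' is the preimage of N' under P.  It is an ideal; it is
   solvable, since once the derived series of N' has vanished its own derived
   series lies in E_N, which is solvable with N; and it is maximal, since a
   solvable ideal I containing it meets E_S in a solvable ideal of E_S
   containing N', hence in N', while P maps I into I :&: E_S.  Finally S_exp
   meets the preimage only in N' :&: S_exp = 0, and x = (x - P x) + P x with
   P x in N' + S_exp. *)

Lemma mem_span_linear (K : fieldType) (V W : vectType K) (f : V -> W)
    (X : seq V) (U : {vspace W}) z :
  linear f -> {in X, forall x, f x \in U} -> z \in <<X>>%VS -> f z \in U.
Proof.
move=> f_lin fXU.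
pose fL : {linear V -> W} := HB.pack f (GRing.isLinear.Build _ _ _ _ f f_lin).
have -> : f z = linfun fL z by rewrite lfunE.
move=> /(memv_img (linfun fL)); rewrite limg_span; apply/subvP/span_subvP.
by move=> _ /mapP [x Xx ->]; rewrite lfunE; apply: fXU.
Qed.

Lemma daddv_pi_ker (K : fieldType) (vT : vectType K) (U W : {vspace vT}) w :
  (U :&: W = 0)%VS -> w \in W -> daddv_pi U W w = 0.
Proof.
move=> capUW Ww; apply: (addIr w); rewrite add0r.
have capWU : (W :&: U = 0)%VS by rewrite capvC.
by rewrite -{3}(daddv_pi_add capUW (subvP (addvSr U W) _ Ww)) (daddv_pi_id capWU).
Qed.

Lemma daddv_pi_sub (K : fieldType) (vT : vectType K) (U W : {vspace vT}) w :
  (U :&: W = 0)%VS -> (w \in U + W)%VS -> w - daddv_pi U W w \in W.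
Proof.
by move=> capUW UWw; rewrite -{1}(daddv_pi_add capUW UWw) addrAC subrr add0r memv_pi.
Qed.

Section Bracket.
Variables (F : fieldType) (V : vectType F) (br : V -> V -> V).
Hypotheses (brL : forall z, linear (br^~ z)) (brR : forall z, linear (br z)).

Let brDl z : {morph br^~ z : x y / x + y} := (GRing.semilinear_linear (brL z)).2.
Let brDr z : {morph br z : x y / x + y} := (GRing.semilinear_linear (brR z)).2.

Lemma mem_brspace (A B : {vspace V}) x y :
  x \in A -> y \in B -> br x y \in brspace br A B.
Proof.
rewrite -{1}(span_basis (vbasisP A)) -{1}(span_basis (vbasisP B)) => Ax By.
apply: (mem_span_linear (brL y)) Ax => u Au.
apply: (mem_span_linear (brR u)) By => v Bv.
by apply: memv_span; apply: allpairs_f.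
Qed.

Lemma brspace_subvP (A B U : {vspace V}) :
  (brspace br A B <= U)%VS <-> {in A & B, forall x y, br x y \in U}.
Proof.
split=> [/subvP sABU x y Ax By | brU]; first exact/sABU/mem_brspace.
apply/span_subvP => _ /allpairsP [[x y] /= [Ax By ->]].
by apply: brU; apply: vbasis_mem.
Qed.

Lemma brspaceS (A A' B B' : {vspace V}) :
  (A <= A')%VS -> (B <= B')%VS -> (brspace br A B <= brspace br A' B')%VS.
Proof.
move=> /subvP sAA' /subvP sBB'; apply/brspace_subvP => x y Ax By.
by apply: mem_brspace; [apply: sAA' | apply: sBB'].
Qed.

Lemma derivedS (A B : {vspace V}) k :
  (A <= B)%VS -> (derived br A k <= derived br B k)%VS.
Proof. by move=> sAB; elim: k => [|k IHk] //; rewrite /derived !iterS brspaceS. Qed.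

Lemma derivedD (A : {vspace V}) k l :
  derived br A (l + k) = derived br (derived br A k) l.
Proof. by rewrite /derived iterD. Qed.

Lemma solvableS (A B : {vspace V}) :
  (A <= B)%VS -> solvable br B -> solvable br A.
Proof.
move=> sAB [k derB0]; exists k; apply/eqP; rewrite eqEsubv sub0v andbT.
by rewrite -derB0 derivedS.
Qed.

Lemma mem_derived_morph (f : {linear V -> V}) (A B : {vspace V}) k :
  {morph f : x y / br x y} -> {in A, forall x, f x \in B} ->
  {in derived br A k, forall x, f x \in derived br B k}.
Proof.
move=> f_br fAB; elim: k => [|k IHk] // x.
rewrite /derived !iterS -!/(derived br _ k).
move=> /(mem_span_linear (@linearP _ _ _ _ f)); apply.
move=> _ /allpairsP [[u v] /= [Au Av ->]].
by rewrite f_br; apply: mem_brspace; apply: IHk; apply: vbasis_mem.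
Qed.

Hypothesis brxx : forall x, br x x = 0.

Lemma br_anti x y : br x y = - br y x.
Proof.
apply/eqP; rewrite -addr_eq0; have := brxx (x + y).
by rewrite brDl !brDr !brxx add0r addr0 => ->.
Qed.

Lemma daddv_pi_br (K T : {vspace V}) :
  (brspace br fullv K <= K)%VS -> subalg br T ->
  directv (K + T) -> (K + T)%VS = fullv -> {morph daddv_pi T K : x y / br x y}.
Proof.
move=> idK subT /directv_addP capKT sumKT x y; set q := daddv_pi T K.
have capTK : (T :&: K = 0)%VS by rewrite capvC.
have brK u v : v \in K -> br u v \in K.
  by move=> Kv; apply: (brspace_subvP _ _ _).1 idK u v (memvf u) Kv.
have memTK u : u \in (T + K)%VS by rewrite addvC sumKT memvf.
have qK k : k \in K -> q k = 0 by apply: daddv_pi_ker.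
have subqK u : u - q u \in K by apply: daddv_pi_sub.
have -> : br x y = br (x - q x) y + br (q x) (y - q y) + br (q x) (q y).
  by rewrite -addrA -brDr subrK -brDl subrK.
have K1 : br (x - q x) y \in K by rewrite br_anti memvN brK ?subqK.
have K2 : br (q x) (y - q y) \in K by rewrite brK ?subqK.
rewrite !linearD /= (qK _ K1) (qK _ K2) !add0r.
apply: daddv_pi_id capTK _.
by apply: (brspace_subvP _ _ _).1 subT _ _ (memv_pi _ _ _) (memv_pi _ _ _).
Qed.

End Bracket.

Section SplitExtension.
Variables (F : fieldType) (V : vectType F) (br : V -> V -> V).
Hypotheses (brL : forall z, linear (br^~ z)) (brR : forall z, linear (br z)).
Variables (K T N' S' : {vspace V}) (P : {linear V -> V}).
Hypotheses (P_br : {morph P : x y / br x y}) (P_T : forall x, P x \in T).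
Hypotheses (P_id : {in T, forall t, P t = t}) (P_K : {in K, forall k, P k = 0}).
Hypotheses (subP_K : forall x, x - P x \in K) (solK : solvable br K).
Hypothesis leviT : levi_decomp br T N' S'.

Let sN'T : (N' <= T)%VS. Proof. by case: leviT => [[[]]]. Qed.

Lemma mem_split_radical x : x \in (K + N')%VS <-> P x \in N'.
Proof.
split=> [/memv_addP [k Kk [n N'n ->]] | N'Px].
  by rewrite linearD P_K // add0r P_id // (subvP sN'T).
by rewrite -(subrK (P x) x) memv_add.
Qed.

Lemma split_radical_ideal : ideal_of br fullv (K + N').
Proof.
split; first exact: subvf.
apply/(brspace_subvP brL brR) => x y _ /mem_split_radical N'Py.
apply/mem_split_radical; rewrite P_br.
case: leviT => [[[_ idN'] _ _] _ _ _ _].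
exact: (brspace_subvP brL brR _ _ _).1 idN' _ _ (P_T x) N'Py.
Qed.

Lemma split_radical_solvable : solvable br (K + N').
Proof.
case: leviT => [[_ [kN' derN'0] _] _ _ _ _]; case: solK => kK derK0.
have derRK : (derived br (K + N') kN' <= K)%VS.
  apply/subvP => x Rx.
  have := mem_derived_morph brL brR P_br (fun y => iffLR (mem_split_radical y)) Rx.
  by rewrite derN'0 memv0 => /eqP Px0; rewrite -(subr0 x) -Px0.
exists (kK + kN'); apply/eqP; rewrite eqEsubv sub0v andbT derivedD -derK0.
exact: derivedS.
Qed.

Lemma split_radical : radical_of br fullv (K + N').
Proof.
split; [exact: split_radical_ideal | exact: split_radical_solvable |].
move=> I [_ idI] solI sRI; apply/eqP; rewrite eqEsubv sRI andbT.
case: leviT => [[_ _ maxN'] _ _ _ _].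
have capIT : (I :&: T)%VS = N'.
  apply: maxN'; last by rewrite subv_cap sN'T (subv_trans (addvSr K N')).
    split; first exact: capvSr.
    apply/(brspace_subvP brL brR) => x y Tx /memv_capP [Iy Ty].
    have Ixy : br x y \in I.
      exact: (brspace_subvP brL brR _ _ _).1 idI _ _ (memvf x) Iy.
    by rewrite memv_cap Ixy -(P_id Tx) -(P_id Ty) -P_br P_T.
  exact: (@solvableS _ _ br brL brR _ _ (capvSl I T) solI).
apply/subvP => x Ix; apply/mem_split_radical; rewrite -capIT memv_cap P_T andbT.
have -> : P x = x - (x - P x) by rewrite opprB addrC subrK.
by rewrite memvB // (subvP sRI) // (subvP (addvSl K N')).
Qed.

Lemma levi_decomp_split : levi_decomp br fullv (K + N') S'.
Proof.
case: leviT => [_ subS' ssS' /directv_addP capN'S' sumN'S'].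
split=> //; first exact: split_radical.
  apply/directv_addP/eqP; rewrite -subv0 -capN'S'; apply/subvP => x.
  move=> /memv_capP [/mem_split_radical N'Px S'x].
  have Tx : x \in T by rewrite -sumN'S' -[x]add0r memv_add ?mem0v.
  by rewrite memv_cap S'x -(P_id Tx) N'Px.
apply/eqP; rewrite eqEsubv subvf; apply/subvP => x _.
have := P_T x; rewrite -sumN'S' => /memv_addP [n N'n [s S's Pxe]].
have -> : x = x - P x + n + s by rewrite -addrA -Pxe subrK.
by apply: memv_add => //; apply: memv_add.
Qed.

End SplitExtension.

Section Expansion.
Variables (F : fieldType) (n : nat) (C : 'I_n -> 'I_n -> 'I_n -> F).
Variables (m : nat) (mul : 'I_m -> 'I_m -> 'I_m).
Local Notation lb := (lie_br C).
Local Notation eb := (exp_br mul C).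

Lemma row_exp_br (A B : 'M[F]_(m, n)) g :
  row g (eb A B) = \sum_a \sum_b (mul a b == g)%:R *: lb (row a A) (row b B).
Proof.
apply/rowP => k; rewrite !mxE summxE; apply: eq_bigr => a _.
rewrite summxE; apply: eq_bigr => b _; rewrite !mxE big_distrr /=.
apply: eq_bigr => i _; rewrite big_distrr; apply: eq_bigr => j _.
by rewrite !mxE /selector /=; ring.
Qed.

Lemma row_tens (g a : 'I_m) (v : 'rV[F]_n) : row g (tens a v) = (g == a)%:R *: v.
Proof. by apply/rowP => k; rewrite !mxE big_ord1 !mxE eqxx andbT. Qed.

Lemma mem_expand_space (W : {vspace 'rV[F]_n}) A :
  A \in expand_space m W <-> forall a, row a A \in W.
Proof.
split=> [SWA a | WA].
  apply: (mem_span_linear (@linearP _ _ _ _ (row a))) SWA.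
  move=> _ /allpairsP [[b v] /= [_ Wv ->]].
  by rewrite row_tens memvZ ?vbasis_mem.
have -> : A = \sum_a tens a (row a A).
  apply/row_matrixP => g; rewrite raddf_sum (bigD1 g) //= row_tens eqxx scale1r.
  rewrite big1 ?addr0 // => a; rewrite row_tens eq_sym => /negbTE ->.
  by rewrite scale0r.
apply: memv_suml => a _; move: (WA a); rewrite -{1}(span_basis (vbasisP W)).
apply: mem_span_linear => [c u v | v Wv]; first by rewrite /tens mulmxDr scalemxAr.
by apply: memv_span; apply: allpairs_f; rewrite ?mem_enum.
Qed.

Lemma exp_br_expand_space (U U' W : {vspace 'rV[F]_n}) A B :
  {in U & U', forall u v, lb u v \in W} ->
  A \in expand_space m U -> B \in expand_space m U' -> eb A B \in expand_space m W.
Proof.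
move=> lbW /mem_expand_space UA /mem_expand_space UB; apply/mem_expand_space => g.
by rewrite row_exp_br; do 2![apply: memv_suml => ? _]; rewrite memvZ ?lbW.
Qed.

Lemma expand_space0 : expand_space m (0 : {vspace 'rV[F]_n}) = 0%VS.
Proof.
apply/eqP; rewrite -subv0; apply/subvP => A /mem_expand_space A0.
by rewrite memv0; apply/eqP/row_matrixP => a; rewrite row0; apply/eqP; rewrite -memv0.
Qed.

Section Bilinear.
Hypotheses (lbL : forall z, linear (lb^~ z)) (lbR : forall z, linear (lb z)).

Lemma exp_br_linearl Z : linear (eb^~ Z).
Proof.
move=> c X Y; apply/row_matrixP => g; rewrite linearP /= !row_exp_br.
rewrite scaler_sumr -big_split; apply: eq_bigr => a _.
rewrite scaler_sumr -big_split; apply: eq_bigr => b _ /=.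
by rewrite linearP lbL scalerDr !scalerA mulrC.
Qed.

Lemma exp_br_linearr Z : linear (eb Z).
Proof.
move=> c X Y; apply/row_matrixP => g; rewrite linearP /= !row_exp_br.
rewrite scaler_sumr -big_split; apply: eq_bigr => a _.
rewrite scaler_sumr -big_split; apply: eq_bigr => b _ /=.
by rewrite linearP lbR scalerDr !scalerA mulrC.
Qed.

Lemma derived_expand_space (W : {vspace 'rV[F]_n}) k :
  (derived eb (expand_space m W) k <= expand_space m (derived lb W k))%VS.
Proof.
elim: k => [|k IHk] //; rewrite /derived !iterS -!/(derived _ _ k).
apply/(brspace_subvP exp_br_linearl exp_br_linearr) => X Y DX DY.
apply: exp_br_expand_space (subvP IHk _ DX) (subvP IHk _ DY).
exact: mem_brspace.
Qed.

Lemma solvable_expand_space (W : {vspace 'rV[F]_n}) :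
  solvable lb W -> solvable eb (expand_space m W).
Proof.
case=> k derW0; exists k; apply/eqP; rewrite -subv0 -expand_space0.
by rewrite -derW0 derived_expand_space.
Qed.

End Bilinear.

End Expansion.

(* [rowwise f] is id (x) f on S (x) G: it maps lambda_a (x) v to lambda_a (x) f v. *)
Definition rowwise (F : fieldType) (m n : nat) (f : 'rV[F]_n -> 'rV[F]_n)
  (A : 'M[F]_(m, n)) : 'M[F]_(m, n) := \matrix_a f (row a A).

Lemma row_rowwise (F : fieldType) (m n : nat) f (A : 'M[F]_(m, n)) a :
  row a (rowwise f A) = f (row a A).
Proof. exact: rowK. Qed.

Lemma rowwise_is_linear (F : fieldType) (m n : nat) (f : {linear 'rV[F]_n -> 'rV[F]_n}) :
  linear (@rowwise F m n f).
Proof.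
by move=> c A B; apply/row_matrixP => a; rewrite linearP /= !row_rowwise !linearP.
Qed.

HB.instance Definition _ (F : fieldType) (m n : nat) (f : {linear 'rV[F]_n -> 'rV[F]_n}) :=
  GRing.isLinear.Build F 'M[F]_(m, n) 'M[F]_(m, n) *:%R (rowwise f) (rowwise_is_linear f).

Lemma rowwise_exp_br (F : fieldType) (n : nat) (C : 'I_n -> 'I_n -> 'I_n -> F)
    (m : nat) (mul : 'I_m -> 'I_m -> 'I_m) (f : {linear 'rV[F]_n -> 'rV[F]_n}) :
  {morph f : u v / lie_br C u v} -> {morph rowwise f : A B / exp_br mul C A B}.
Proof.
move=> f_br A B; apply/row_matrixP => g; rewrite row_rowwise !row_exp_br linear_sum.
apply: eq_bigr => a _; rewrite linear_sum; apply: eq_bigr => b _.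
by rewrite linearZ /= f_br !row_rowwise.
Qed.

Section ExpandedProjection.
Variables (F : fieldType) (n m : nat) (N S : {vspace 'rV[F]_n}).
Hypotheses (dirNS : directv (N + S)) (sumNS : (N + S)%VS = fullv).
Local Notation P := (rowwise (daddv_pi S N) : 'M[F]_(m, n) -> 'M[F]_(m, n)).

Let capSN : (S :&: N = 0)%VS. Proof. by rewrite capvC; apply/directv_addP. Qed.
Let memSN u : u \in (S + N)%VS. Proof. by rewrite addvC sumNS memvf. Qed.

Lemma expand_projection_in A : P A \in expand_space m S.
Proof. by apply/mem_expand_space => a; rewrite row_rowwise memv_pi. Qed.

Lemma expand_projection_id : {in expand_space m S, forall A, P A = A}.
Proof.
move=> A /mem_expand_space SA; apply/row_matrixP => a.
by rewrite row_rowwise daddv_pi_id.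
Qed.

Lemma expand_projection_ker : {in expand_space m N, forall A, P A = 0}.
Proof.
move=> A /mem_expand_space NA; apply/row_matrixP => a.
by rewrite row_rowwise row0 daddv_pi_ker.
Qed.

Lemma expand_projection_sub A : A - P A \in expand_space m N.
Proof.
by apply/mem_expand_space => a; rewrite linearB /= row_rowwise daddv_pi_sub.
Qed.

End ExpandedProjection.

Theorem theorem4 (F : fieldType) (charF0 : [pchar F] =i pred0)
  (n : nat) (C : 'I_n -> 'I_n -> 'I_n -> F)
  (m : nat) (mul : 'I_m -> 'I_m -> 'I_m)
  (mulA : associative mul) (mulC : commutative mul)
  (N S : {vspace 'rV[F]_n})
  (N' Sexp : {vspace 'M[F]_(m, n)}) :
  is_lie (lie_br C) ->
  levi_decomp (lie_br C) fullv N S ->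
  levi_decomp (exp_br mul C) (expand_space m S) N' Sexp ->
  radical_of (exp_br mul C) fullv (expand_space m N + N')%VS /\
  levi_decomp (exp_br mul C) fullv (expand_space m N + N')%VS Sexp.
Proof.
move=> [lbL lbR lbxx _] [[[_ idN] solN _] subS _ dirNS sumNS] leviES.
have lbL' z : linear (lie_br C ^~ z) by move=> a x y; apply: lbL.
have lbR' z : linear (lie_br C z) by move=> a x y; apply: lbR.
have p_br := daddv_pi_br lbL' lbR' lbxx idN subS dirNS sumNS.
have leviE := levi_decomp_split (exp_br_linearl mul lbL') (exp_br_linearr mul lbR')
  (rowwise_exp_br mul p_br) (expand_projection_in N S) (expand_projection_id dirNS)
  (expand_projection_ker dirNS) (expand_projection_sub dirNS sumNS)
  (solvable_expand_space mul lbL' lbR' solN) leviES.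
by split; first case: leviE.
Qed.
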